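(* Let $k$ be a field of characteristic $\neq 2$, and let $\mathfrak g$, $u_0,u_1,u_2$ and $\mathfrak g_0,\mathfrak g_1,\mathfrak g_2$ be as in the context. For each $i=0,1,2$, the set $\{u_i\}\cup\{u_it^n,\ u_i(t')^n,\ u_i(t'')^n: n\geq 1\}$ is a $k$-basis of $\mathfrak g_i$.
   Context: $\mathcal A=k[t,t^{-1},(1-t)^{-1}]$, $t'=1-t^{-1}$, $t''=(1-t)^{-1}$, $\mathfrak g=\mathfrak{sl}_2(k)\otimes_k\mathcal A$. With $x=\begin{pmatrix}-1&2\\0&1\end{pmatrix}$, $y=\begin{pmatrix}-1&0\\-2&1\end{pmatrix}$, $z=\begin{pmatrix}1&0\\0&-1\end{pmatrix}$: $u_0=\tfrac14(z\otimes 1+x\otimes t''+y\otimes(t''-1))$, $u_1=\tfrac14(x\otimes 1+y\otimes t+z\otimes(t-1))$, $u_2=\tfrac14(y\otimes 1+z\otimes t'+x\otimes(t'-1))$. $\tau_1$ is the $\mathcal A$-linear map of $\mathfrak g$ with $\tau_1(x\otimes 1)=-x\otimes 1$, $\tau_1(y\otimes 1)=-(z\otimes t'+x\otimes(t'-1))$, $\tau_1(z\otimes 1)=x\otimes t''+y\otimes(t''-1)$; $\tau_2$ is the $\mathcal A$-linear map with $\tau_2(x\otimes 1)=y\otimes t+z\otimes(t-1)$, $\tau_2(y\otimes 1)=-y\otimes 1$, $\tau_2(z\otimes 1)=-(x\otimes t''+y\otimes(t''-1))$. Then $\mathfrak g_0=\{g:\tau_1(g)=g,\tau_2(g)=-g\}$,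 $\mathfrak g_1=\{g:\tau_1(g)=-g,\tau_2(g)=g\}$, $\mathfrak g_2=\{g:\tau_1(g)=-g,\tau_2(g)=-g\}$. *)

From HB Require Import structures.
From mathcomp Require Import all_boot all_order all_algebra.
Set Implicit Arguments. Unset Strict Implicit. Unset Printing Implicit Defensive.
Import Order.TTheory GRing.Theory Num.Theory.
Local Open Scope ring_scope.

(* A := k[t, t^-1, (1-t)^-1], realised as the subring of K of elements
        p / (t^m (1-t)^n), p in k[t].
   g := sl_2(k) (x) A, realised (as usual, A being a free k-module) as
        sl_2(A) = traceless 2x2 matrices with entries in A, inside 'M[K]_2.
        The pure tensor X (x) a is  a *: X. *)
Section Setup.
Variable k : fieldType.

Definition Kf := {fraction {poly k}}.
Definition emb (p : {poly k}) : Kf := @FracField.tofrac {poly k} p.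
Definition kK (c : k) : Kf := emb (c%:P).

Definition tt : Kf := emb 'X.
Definition tt' : Kf := 1 - tt^-1.
Definition tt'' : Kf := (1 - tt)^-1.

Definition inA (a : Kf) : Prop :=
  exists (p : {poly k}) (m n : nat), a = emb p / (tt ^+ m * (1 - tt) ^+ n).

Definition mx2 (a b c d : Kf) : 'M[Kf]_2 :=
  \matrix_(i < 2, j < 2)
    if i == 0 then (if j == 0 then a else b) else (if j == 0 then c else d).

Definition xm : 'M[Kf]_2 := mx2 (-1) 2 0 1.
Definition ym : 'M[Kf]_2 := mx2 (-1) 0 (-2) 1.
Definition zm : 'M[Kf]_2 := mx2 1 0 0 (-1).

Definition ing (g : 'M[Kf]_2) : Prop :=
  \tr g = 0 /\ forall i j, inA (g i j).

(* coordinates of a traceless matrix [[a,b],[c,-a]] in the basis x, y, z: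
   g = cx g *: x + cy g *: y + cz g *: z  (needs 2 invertible) *)
Definition cx (g : 'M[Kf]_2) : Kf := g 0 1 / 2.
Definition cy (g : 'M[Kf]_2) : Kf := - (g 1 0 / 2).
Definition cz (g : 'M[Kf]_2) : Kf := g 0 0 + cx g + cy g.

Definition tau1x : 'M[Kf]_2 := - xm.
Definition tau1y : 'M[Kf]_2 := - (tt' *: zm + (tt' - 1) *: xm).
Definition tau1z : 'M[Kf]_2 := tt'' *: xm + (tt'' - 1) *: ym.
Definition tau2x : 'M[Kf]_2 := tt *: ym + (tt - 1) *: zm.
Definition tau2y : 'M[Kf]_2 := - ym.
Definition tau2z : 'M[Kf]_2 := - (tt'' *: xm + (tt'' - 1) *: ym).

Definition tau1 (g : 'M[Kf]_2) : 'M[Kf]_2 :=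
  cx g *: tau1x + cy g *: tau1y + cz g *: tau1z.
Definition tau2 (g : 'M[Kf]_2) : 'M[Kf]_2 :=
  cx g *: tau2x + cy g *: tau2y + cz g *: tau2z.

Definition gsub (i : 'I_3) (g : 'M[Kf]_2) : Prop :=
  ing g /\
  if i == 0 :> nat then tau1 g = g /\ tau2 g = - g
  else if i == 1 :> nat then tau1 g = - g /\ tau2 g = g
  else tau1 g = - g /\ tau2 g = - g.

Definition u (i : 'I_3) : 'M[Kf]_2 :=
  if i == 0 :> nat then 4^-1 *: (zm + tt'' *: xm + (tt'' - 1) *: ym)
  else if i == 1 :> nat then 4^-1 *: (xm + tt *: ym + (tt - 1) *: zm)
  else 4^-1 *: (ym + tt' *: zm + (tt' - 1) *: xm).

Definition s (j : 'I_3) : Kf :=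
  if j == 0 :> nat then tt else if j == 1 :> nat then tt' else tt''.

(* the family  {u_i} u {u_i t^n, u_i t'^n, u_i t''^n : n >= 1},
   indexed by None (u_i) and Some (j, n) (u_i * (s j)^(n+1)) *)
Definition fam (i : 'I_3) (e : option ('I_3 * nat)) : 'M[Kf]_2 :=
  match e with
  | None => u i
  | Some (j, n) => (s j ^+ n.+1) *: u i
  end.

Definition is_kbasis (I : eqType) (V : 'M[Kf]_2 -> Prop) (b : I -> 'M[Kf]_2)
  : Prop :=
  [/\ forall e, V (b e),
      forall (l : seq I) (c : I -> k), uniq l ->
        \sum_(e <- l) kK (c e) *: b e = 0 -> forall e, e \in l -> c e = 0
    & forall g, V g -> exists (l : seq I) (c : I -> k),
        g = \sum_(e <- l) kK (c e) *: b e].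

End Setup.

(* The involutions tau_1, tau_2 are A-linear.  In the coordinates of the
   basis x, y, z of sl_2, their simultaneous eigenvalue equations force a
   traceless matrix to be a multiple of u_i by one of its coordinates, which
   lies in A; so g_i = A u_i is free of rank one over A, and it remains to see
   that 1, t^n, t'^n, t''^n (n >= 1) is a k-basis of A.  The functions
   s_0, s_1, s_2 = t, t', t'' form an orbit of x |-> 1 - 1/x, so
   s_j s_(j+1) = s_j - 1 (indices mod 3); this rewrites every monomial in
   them as a combination of pure powers, and with t^-1 = 1 - t' and
   (1 - t)^-1 = t'' the family spans A.  It is free because
   t, t', t'' have their poles at infinity, 0, 1 respectively and are regular
   at the other two points: a polynomial in one of them which is regular at
   its pole is constant. *)

From HB Require Import structures.
From mathcomp Require Import all_boot all_order all_algebra.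
From mathcomp Require Import ring zify.
Set Implicit Arguments.
Unset Strict Implicit.
Unset Printing Implicit Defensive.
Import GRing.Theory.
Local Open Scope ring_scope.

Section Places.
Variables (F L : fieldType) (f : {rmorphism F -> L}).

Record place := Place {
  regular : L -> Prop;
  vanishing : L -> Prop;
  regular_const c : regular (f c);
  regular_add x y : regular x -> regular y -> regular (x + y);
  regular_mul x y : regular x -> regular y -> regular (x * y);
  vanishing_regular x : vanishing x -> regular x;
  vanishing_add x y : vanishing x -> vanishing y -> vanishing (x + y);
  vanishing_mull x y : regular x -> vanishing y -> vanishing (x * y);
  vanishing_const c : vanishing (f c) -> c = 0 }.

Variable v : place.

Lemma regular_opp x : regular v x -> regular v (- x).
Proof.
move=> vx; rewrite -mulN1r -(rmorph1 f) -rmorphN.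
exact: regular_mul (regular_const v _) vx.
Qed.

Lemma regular_sum (I : Type) (r : seq I) (P : pred I) (G : I -> L) :
  (forall i, P i -> regular v (G i)) -> regular v (\sum_(i <- r | P i) G i).
Proof.
move=> vG; apply: big_ind => [||i /vG //]; last exact: regular_add.
by rewrite -(rmorph0 f); apply: regular_const.
Qed.

Lemma regular_exp x n : regular v x -> regular v (x ^+ n).
Proof.
move=> vx; elim: n => [|n IHn]; last by rewrite exprS; apply: regular_mul.
by rewrite expr0 -(rmorph1 f); apply: regular_const.
Qed.

Lemma regular_horner (P : {poly F}) x :
  regular v x -> regular v (map_poly f P).[x].
Proof.
move=> vx; rewrite horner_coef; apply: regular_sum => i _.
by rewrite coef_map; apply: regular_mul (regular_const v _) (regular_exp _ vx).
Qed.

Lemma vanishing_expS x n : vanishing v x -> vanishing v (x ^+ n.+1).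
Proof.
move=> vx; rewrite exprSr.
exact: vanishing_mull (regular_exp _ (vanishing_regular vx)) vx.
Qed.

Lemma vanishing_sub x y : vanishing v x -> vanishing v y -> vanishing v (x - y).
Proof.
move=> vx vy; apply: vanishing_add vx _.
by rewrite -mulN1r -(rmorph1 f) -rmorphN; apply: vanishing_mull (regular_const v _) vy.
Qed.

Lemma exp_mul_hornerV (P : {poly F}) w n : w != 0 -> (size P <= n.+1)%N ->
  w ^+ n * (map_poly f P).[w^-1] = \sum_(i < n.+1) f P`_i * w ^+ (n - i).
Proof.
move=> w0 sP; rewrite (@horner_coef_wide _ n.+1) ?size_map_poly // mulr_sumr.
apply: eq_bigr => i _; rewrite coef_map exprVn mulrCA expfB_cond ?(negPf w0) //.
by rewrite add0n -ltnS.
Qed.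

(* With d = deg P, w^d P(1/w) = lead_coef P + w * (regular), and it vanishes. *)
Lemma size_le1_of_regular_hornerV (P : {poly F}) w :
  vanishing v w -> w != 0 -> regular v (map_poly f P).[w^-1] -> (size P <= 1)%N.
Proof.
move=> vw w0 vP; case sP: (size P) => [|[|n]] //.
have lcP : P`_n.+1 != 0.
  by rewrite -[n.+1]/(n.+2.-1) -sP -lead_coefE lead_coef_eq0 -size_poly_gt0 sP.
have := vanishing_mull vP (vanishing_expS n vw).
rewrite mulrC exp_mul_hornerV ?sP // big_ord_recr /= subnn expr0 mulr1.
set R := \sum_(i < n.+1) _ => vRP; case/eqP: lcP.
apply: (vanishing_const (p := v)); rewrite -(addrK R (f _)) (addrC (f _)).
apply: vanishing_sub vRP _; apply: big_ind => [||i _].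
- by rewrite -(mul0r w) -(rmorph0 f); apply: vanishing_mull (regular_const v _) vw.
- exact: vanishing_add.
- rewrite subSn; last exact: ltn_ord i.
  by apply: vanishing_mull (regular_const v _) (vanishing_expS _ vw).
Qed.

End Places.

Lemma size_mul_leq_mul (R : idomainType) (p q r s : {poly R}) :
  r != 0 -> s != 0 -> (size p <= size r)%N -> (size q <= size s)%N ->
  (size (p * q)%R <= size (r * s)%R)%N.
Proof.
move=> r0 s0 pr qs; rewrite (size_mul r0 s0); have := size_polyMleq p q.
by move: r0 s0; rewrite -!size_poly_gt0; lia.
Qed.

Lemma size_mul_ltn_mul (R : idomainType) (p q r s : {poly R}) :
  r != 0 -> s != 0 -> (size p < size r)%N -> (size q <= size s)%N ->
  (size (p * q)%R < size (r * s)%R)%N.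
Proof.
move=> r0 s0 pr qs; rewrite (size_mul r0 s0); have := size_polyMleq p q.
by move: r0 s0; rewrite -!size_poly_gt0; lia.
Qed.

Section MoebiusOrbit.
Variables (F : fieldType) (x : F).
Hypotheses (x_neq0 : x != 0) (x_neq1 : 1 - x != 0).
Local Notation x' := (1 - x^-1).
Local Notation x'' := ((1 - x)^-1).

Definition mobius_orbit (j : 'I_3) : F :=
  if j == 0 :> nat then x else if j == 1 :> nat then x' else x''.

Lemma one_sub_inv : x' = (x - 1) / x.
Proof. by field. Qed.

Lemma mobius_orbit_neq0 j : mobius_orbit j != 0.
Proof.
have x_sub1 : x - 1 != 0 by rewrite -opprB oppr_eq0.
case: j => [[|[|[|//]]] ?]; rewrite /mobius_orbit //= ?invr_eq0 //.
by rewrite one_sub_inv mulf_neq0 ?invr_eq0.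
Qed.

Lemma mobius_orbit_mul_succ j :
  mobius_orbit j * mobius_orbit (j + 1) = mobius_orbit j - 1.
Proof.
by case: j => [[|[|[|//]]] ?]; rewrite /mobius_orbit /=; field; rewrite ?x_neq0 ?x_neq1.
Qed.

End MoebiusOrbit.

Section InvolutionsInCoordinates.
Variables (F : fieldType) (x : F).
Hypotheses (x_neq0 : x != 0) (x_neq1 : 1 - x != 0) (four_neq0 : (4 : F) != 0).
Local Notation x' := (1 - x^-1).
Local Notation x'' := ((1 - x)^-1).

Definition scale3 (r : F) (v : F * F * F) : F * F * F :=
  let: (a, b, c) := v in (r * a, r * b, r * c).

Definition tau1c (v : F * F * F) : F * F * F :=
  let: (a, b, c) := v in (- a - b * (x' - 1) + c * x'', c * (x'' - 1), - (b * x')).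
Definition tau2c (v : F * F * F) : F * F * F :=
  let: (a, b, c) := v in (- (c * x''), a * x - b - c * (x'' - 1), a * (x - 1)).

Definition ucoord (i : 'I_3) : F * F * F :=
  if i == 0 :> nat then (x'' / 4, (x'' - 1) / 4, 1 / 4)
  else if i == 1 :> nat then (1 / 4, x / 4, (x - 1) / 4)
  else ((x' - 1) / 4, 1 / 4, x' / 4).

Definition eps1 (i : 'I_3) : F := if i == 0 :> nat then 1 else -1.
Definition eps2 (i : 'I_3) : F := if i == 1 :> nat then 1 else -1.

Definition pivot (i : 'I_3) (v : F * F * F) : F :=
  let: (a, b, c) := v in if i == 0 :> nat then c else if i == 1 :> nat then a else b.

Lemma pivot_ucoord i : pivot i (ucoord i) = 1 / 4.
Proof. by case: i => [[|[|[|//]]] ?]. Qed.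

Lemma tau1c_scale r v : tau1c (scale3 r v) = scale3 r (tau1c v).
Proof. by case: v => [[a b] c] /=; congr (_, _, _); ring. Qed.

Lemma tau2c_scale r v : tau2c (scale3 r v) = scale3 r (tau2c v).
Proof. by case: v => [[a b] c] /=; congr (_, _, _); ring. Qed.

Lemma tau_ucoord i :
  tau1c (ucoord i) = scale3 (eps1 i) (ucoord i) /\
  tau2c (ucoord i) = scale3 (eps2 i) (ucoord i).
Proof.
by case: i => [[|[|[|//]]] ?]; split; rewrite /= /eps1 /eps2 /=; congr (_, _, _);
  field; rewrite ?x_neq0 ?x_neq1 ?four_neq0.
Qed.

Lemma eigen_ucoord i v :
  tau1c v = scale3 (eps1 i) v -> tau2c v = scale3 (eps2 i) v ->
  v = scale3 (4 * pivot i v) (ucoord i).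
Proof.
have x'_neq0 : x' != 0 := mobius_orbit_neq0 x_neq0 x_neq1 1.
case: v => [[a b] c]; case: i => [[|[|[|//]]] ?]; rewrite /= /eps1 /eps2 /= !mul1r !mulN1r.
- by move=> [_ <- _] [/oppr_inj <- _ _]; congr (_, _, _); field; rewrite ?four_neq0 ?x_neq1.
- move=> [_ _ /oppr_inj ec] [_ _ ea]; have -> : b = a * x.
    by apply: (mulIf x'_neq0); rewrite /= ec -ea; field.
  by rewrite -ea; congr (_, _, _); field; rewrite ?four_neq0.
- move=> [_ _ /oppr_inj ec] [/oppr_inj <- _ _]; rewrite -ec; congr (_, _, _);
  by field; rewrite ?four_neq0 ?x_neq0 ?x_neq1.
Qed.

End InvolutionsInCoordinates.

Arguments eps1 {F} i.
Arguments eps2 {F} i.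

Lemma ord3_adj (i j : 'I_3) : i != j -> j = i + 1 \/ i = j + 1.
Proof.
by case: i j => [[|[|[|//]]] ?] [[|[|[|//]]] ?] //= _;
  [left|right|right|left|left|right]; apply/val_inj.
Qed.

Section RationalFunctions.
Variable k : fieldType.
Local Notation K := (Kf k).
Local Notation t := (tt k).

HB.instance Definition _ := GRing.RMorphism.copy (@emb k) (@FracField.tofrac {poly k}).
HB.instance Definition _ := GRing.RMorphism.copy (@kK k) (@emb k \o polyC).

Local Notation s := (s k).
Local Notation kK := (@kK k).

Lemma emb_eq0 (p : {poly k}) : (emb p == 0 :> K) = (p == 0).
Proof. exact: tofrac_eq0. Qed.

Lemma emb_inj : injective (@emb k).
Proof. by move=> p q /eqP; rewrite tofrac_eq => /eqP. Qed.

Lemma embD (p q : {poly k}) : emb (p + q) = emb p + emb q :> K.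
Proof. exact: rmorphD. Qed.

Lemma embM (p q : {poly k}) : emb (p * q) = emb p * emb q :> K.
Proof. exact: rmorphM. Qed.

Lemma embXn (p : {poly k}) n : emb (p ^+ n) = emb p ^+ n :> K.
Proof. exact: rmorphXn. Qed.

Lemma emb_X : emb 'X = t.
Proof. by []. Qed.

Lemma emb_1_subX : emb (1 - 'X) = 1 - t.
Proof. by rewrite rmorphB rmorph1. Qed.

Lemma size_X_sub1 : size ('X - 1 : {poly k}) = 2%N.
Proof. by rewrite -polyC1 size_XsubC. Qed.

Lemma size_1_subX : size (1 - 'X : {poly k}) = 2%N.
Proof. by rewrite -opprB size_polyN size_X_sub1. Qed.

Lemma one_subX_neq0 : (1 - 'X : {poly k}) != 0.
Proof. by rewrite -size_poly_gt0 size_1_subX. Qed.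

Lemma t_neq0 : t != 0.
Proof. by rewrite emb_eq0 polyX_eq0. Qed.

Lemma one_sub_t_neq0 : 1 - t != 0.
Proof. by rewrite -emb_1_subX emb_eq0 one_subX_neq0. Qed.

Lemma add_frac (p1 q1 p2 q2 : {poly k}) : q1 != 0 -> q2 != 0 ->
  emb p1 / emb q1 + emb p2 / emb q2 = emb (p1 * q2 + p2 * q1) / emb (q1 * q2) :> K.
Proof. by move=> q10 q20; rewrite addf_div ?emb_eq0 // embD !embM. Qed.

Lemma mul_frac (p1 q1 p2 q2 : {poly k}) :
  emb p1 / emb q1 * (emb p2 / emb q2) = emb (p1 * p2) / emb (q1 * q2) :> K.
Proof. by rewrite mulf_div !embM. Qed.

Lemma frac_const_eq (c : k) (p q : {poly k}) :
  q != 0 -> kK c = emb p / emb q -> c *: q = p.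
Proof.
move=> q0 e; have cq : kK c * emb q = emb p by rewrite e divfK ?emb_eq0.
by apply: emb_inj; rewrite -mul_polyC embM.
Qed.

Definition regular_at_infty (x : K) : Prop :=
  exists p q : {poly k}, [/\ q != 0, (size p <= size q)%N & x = emb p / emb q].
Definition vanishing_at_infty (x : K) : Prop :=
  exists p q : {poly k}, [/\ q != 0, (size p < size q)%N & x = emb p / emb q].

Definition infty : place kK.
Proof.
apply: (@Place _ _ _ regular_at_infty vanishing_at_infty).
- by move=> c; exists c%:P, 1; rewrite oner_neq0 size_poly1 size_polyC_leq1 rmorph1 divr1.
- move=> _ _ [p1 [q1 [q10 s1 ->]]] [p2 [q2 [q20 s2 ->]]].
  exists (p1 * q2 + p2 * q1), (q1 * q2); rewrite add_frac // mulf_neq0 //.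
  split=> //; apply: leq_trans (size_polyD _ _) _; rewrite geq_max.
  by rewrite size_mul_leq_mul // [q1 * q2]mulrC size_mul_leq_mul.
- move=> _ _ [p1 [q1 [q10 s1 ->]]] [p2 [q2 [q20 s2 ->]]].
  by exists (p1 * p2), (q1 * q2); rewrite mul_frac mulf_neq0 // size_mul_leq_mul.
- by move=> _ [p [q [q0 s ->]]]; exists p, q; rewrite ltnW.
- move=> _ _ [p1 [q1 [q10 s1 ->]]] [p2 [q2 [q20 s2 ->]]].
  exists (p1 * q2 + p2 * q1), (q1 * q2); rewrite add_frac // mulf_neq0 //.
  split=> //; apply: leq_ltn_trans (size_polyD _ _) _; rewrite gtn_max.
  by rewrite size_mul_ltn_mul // [q1 * q2]mulrC size_mul_ltn_mul.
- move=> _ _ [p1 [q1 [q10 s1 ->]]] [p2 [q2 [q20 s2 ->]]].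
  exists (p1 * p2), (q1 * q2); rewrite mul_frac mulf_neq0 // mulrC [q1 * q2]mulrC.
  by rewrite size_mul_ltn_mul.
- move=> c [p [q [q0 s /(frac_const_eq q0) cq]]]; case: (eqVneq c 0) => // c0.
  by move: s; rewrite -cq size_scale // ltnn.
Defined.

Definition regular_at (z : k) (x : K) : Prop :=
  exists p q : {poly k}, q.[z] != 0 /\ x = emb p / emb q.
Definition vanishing_at (z : k) (x : K) : Prop :=
  exists p q : {poly k}, [/\ q.[z] != 0, p.[z] = 0 & x = emb p / emb q].

Lemma poly_neq0_of_horner (q : {poly k}) z : q.[z] != 0 -> q != 0.
Proof. by apply: contraNneq => ->; rewrite horner0. Qed.

Definition at_point (z : k) : place kK.
Proof.
apply: (@Place _ _ _ (regular_at z) (vanishing_at z)).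
- by move=> c; exists c%:P, 1; rewrite hornerC oner_neq0 rmorph1 divr1.
- move=> _ _ [p1 [q1 [q10 ->]]] [p2 [q2 [q20 ->]]].
  exists (p1 * q2 + p2 * q1), (q1 * q2); rewrite hornerM mulf_neq0 //.
  by rewrite add_frac // (poly_neq0_of_horner q10, poly_neq0_of_horner q20).
- move=> _ _ [p1 [q1 [q10 ->]]] [p2 [q2 [q20 ->]]].
  by exists (p1 * p2), (q1 * q2); rewrite mul_frac hornerM mulf_neq0.
- by move=> _ [p [q [q0 _ ->]]]; exists p, q.
- move=> _ _ [p1 [q1 [q10 e1 ->]]] [p2 [q2 [q20 e2 ->]]].
  exists (p1 * q2 + p2 * q1), (q1 * q2); rewrite !hornerE e1 e2 !mul0r addr0 mulf_neq0 //.
  by rewrite add_frac // (poly_neq0_of_horner q10, poly_neq0_of_horner q20).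
- move=> _ _ [p1 [q1 [q10 ->]]] [p2 [q2 [q20 e2 ->]]].
  by exists (p1 * p2), (q1 * q2); rewrite mul_frac !hornerM e2 mulr0 mulf_neq0.
- move=> c [p [q [q0 pz /(frac_const_eq (poly_neq0_of_horner q0)) cq]]].
  by move: pz; rewrite -cq hornerZ => /eqP; rewrite mulf_eq0 (negPf q0) orbF => /eqP.
Defined.

Lemma sE j : s j = mobius_orbit t j.
Proof. by []. Qed.

Lemma s_neq0 j : s j != 0.
Proof. exact: mobius_orbit_neq0 t_neq0 one_sub_t_neq0 j. Qed.

Definition snum (j : 'I_3) : {poly k} :=
  if j == 0 :> nat then 'X else if j == 1 :> nat then 'X - 1 else 1.
Definition sden (j : 'I_3) : {poly k} :=
  if j == 0 :> nat then 1 else if j == 1 :> nat then 'X else 1 - 'X.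

Lemma s_frac j : s j = emb (snum j) / emb (sden j).
Proof.
case: j => [[|[|[|//]]] ?]; rewrite sE /mobius_orbit /snum /sden /=.
- by rewrite rmorph1 divr1.
- by rewrite (one_sub_inv t_neq0) rmorphB rmorph1.
- by rewrite emb_1_subX rmorph1 div1r.
Qed.

Definition pole (j : 'I_3) : place kK :=
  if j == 0 :> nat then infty else if j == 1 :> nat then at_point 0 else at_point 1.

Lemma vanishing_pole_s_inv j : vanishing (pole j) (s j)^-1.
Proof.
rewrite s_frac invf_div; case: j => [[|[|[|//]]] ?] /=; rewrite /snum /sden /=.
- by exists 1, 'X; rewrite polyX_eq0 size_poly1 size_polyX.
- by exists 'X, ('X - 1); rewrite !hornerE oppr_eq0 oner_neq0.
- by exists (1 - 'X), 1; rewrite !hornerE subrr oner_neq0.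
Qed.

Lemma regular_pole_s i j : i != j -> regular (pole j) (s i).
Proof.
rewrite s_frac; case: j => [[|[|[|//]]] ?] /= ij; exists (snum i), (sden i);
  by case: i ij => [[|[|[|//]]] ?] //= _; rewrite /snum /sden /= ?hornerE ?subr0 ?oner_neq0
  ?polyX_eq0 ?one_subX_neq0 ?size_X_sub1 ?size_1_subX ?size_polyX ?size_poly1.
Qed.

Lemma pole_parts_eq0 (c0 : k) (P : 'I_3 -> {poly k}) :
  (forall j, (P j)`_0 = 0) ->
  kK c0 + \sum_(j < 3) (map_poly kK (P j)).[s j] = 0 -> c0 = 0 /\ forall j, P j = 0.
Proof.
move=> P0 E; have PE j : P j = 0.
  suff /size1_polyC -> : (size (P j) <= 1)%N by rewrite P0.
  apply: (size_le1_of_regular_hornerV (vanishing_pole_s_inv j)).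
    by rewrite invr_eq0 s_neq0.
  move: E; rewrite invrK (bigD1 j) //= addrCA => /eqP; rewrite addr_eq0 => /eqP ->.
  apply/regular_opp/regular_add; first exact: regular_const.
  by apply: regular_sum => i ij; apply/regular_horner/regular_pole_s.
split=> //; apply/eqP; rewrite -(fmorph_eq0 kK) -E big1 ?addr0 // => j _.
by rewrite PE map_poly0 horner0.
Qed.

Local Notation idx := (option ('I_3 * nat)).

Definition monom (e : idx) : K := if e is Some (j, n) then s j ^+ n.+1 else 1.

Definition const_part (l : seq idx) (c : idx -> k) : k :=
  \sum_(e <- l) if e is None then c e else 0.

Definition pole_part (l : seq idx) (c : idx -> k) (j : 'I_3) : {poly k} :=
  \sum_(e <- l) if e is Some (i, n) then (if i == j then c e *: 'X^(n.+1) else 0) else 0.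

Lemma combination_poles l c :
  \sum_(e <- l) kK (c e) * monom e =
  kK (const_part l c) + \sum_(j < 3) (map_poly kK (pole_part l c j)).[s j].
Proof.
rewrite rmorph_sum; under [X in _ + X]eq_bigr do rewrite raddf_sum horner_sum.
rewrite exchange_big -big_split /=; apply: eq_bigr => -[[i n]|] _ /=.
- rewrite rmorph0 add0r (bigD1 i) //= eqxx map_polyZ map_polyXn hornerZ hornerXn.
  by rewrite big1 ?addr0 // => j ji; rewrite eq_sym (negPf ji) map_poly0 horner0.
- by rewrite mulr1 big1 ?addr0 // => j _; rewrite map_poly0 horner0.
Qed.

Lemma const_part_uniq l c : uniq l -> None \in l -> const_part l c = c None.
Proof. by move=> ul Nl; rewrite /const_part (bigD1_seq None) //= big1 ?addr0 // => -[]. Qed.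

Lemma pole_part_coef l c j n : uniq l -> Some (j, n) \in l ->
  (pole_part l c j)`_n.+1 = c (Some (j, n)).
Proof.
move=> ul el; rewrite /pole_part coef_sum (bigD1_seq _ el ul) /= eqxx coefZ coefXn eqxx.
rewrite mulr1 big1 ?addr0 // => -[[i m]|] ne /=; last by rewrite coef0.
case: (eqVneq i j) => [ij|_]; last by rewrite coef0.
by rewrite coefZ coefXn eqSS; case: (eqVneq n m) ne => [<-|]; rewrite ?ij ?eqxx ?mulr0.
Qed.

Lemma pole_part_coef0 l c j : (pole_part l c j)`_0 = 0.
Proof.
rewrite /pole_part coef_sum big1 // => -[[i n]|] _; last by rewrite coef0.
by case: (_ == _); rewrite ?coefZ ?coefXn ?mulr0 ?coef0.
Qed.

Lemma monom_free l c : uniq l ->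
  \sum_(e <- l) kK (c e) * monom e = 0 -> forall e, e \in l -> c e = 0.
Proof.
move=> ul; rewrite combination_poles.
move=> /(pole_parts_eq0 (pole_part_coef0 l c))[c00 P0] [[j n]|] el.
- by rewrite -(pole_part_coef c ul el) P0 coef0.
- by rewrite -(const_part_uniq c ul el).
Qed.

Lemma den_neq0 m n : t ^+ m * (1 - t) ^+ n != 0.
Proof. by apply: mulf_neq0; apply: expf_neq0; [exact: t_neq0 | exact: one_sub_t_neq0]. Qed.

Lemma inA_add (a b : K) : inA a -> inA b -> inA (a + b).
Proof.
move=> [p1 [m1 [n1 ->]]] [p2 [m2 [n2 ->]]].
exists (p1 * ('X ^+ m2 * (1 - 'X) ^+ n2) + p2 * ('X ^+ m1 * (1 - 'X) ^+ n1)).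
exists (m1 + m2)%N, (n1 + n2)%N; rewrite addf_div; try exact: den_neq0.
by rewrite embD !embM !embXn emb_X emb_1_subX !exprD mulrACA.
Qed.

Lemma inA_mul (a b : K) : inA a -> inA b -> inA (a * b).
Proof.
move=> [p1 [m1 [n1 ->]]] [p2 [m2 [n2 ->]]].
by exists (p1 * p2), (m1 + m2)%N, (n1 + n2)%N; rewrite mulf_div embM !exprD mulrACA.
Qed.

Lemma inA_const c : inA (kK c).
Proof. by exists c%:P, 0%N, 0%N; rewrite !expr0 mulr1 divr1. Qed.

Lemma inA_1 : inA (1 : K).
Proof. by rewrite -(rmorph1 kK); apply: inA_const. Qed.

Lemma inA_nat n : inA (n%:R : K).
Proof. by rewrite -(rmorph_nat kK); apply: inA_const. Qed.

Lemma inA_natV n : inA (n%:R^-1 : K).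
Proof. by rewrite -(rmorph_nat kK) -fmorphV; apply: inA_const. Qed.

Lemma inA_opp (a : K) : inA a -> inA (- a).
Proof. by rewrite -mulN1r -(rmorph1 kK) -rmorphN; apply/inA_mul/inA_const. Qed.

Lemma inA_exp (a : K) n : inA a -> inA (a ^+ n).
Proof.
move=> Aa; elim: n => [|n IHn]; last by rewrite exprS; apply: inA_mul.
by rewrite expr0; apply: inA_1.
Qed.

Lemma inA_t_inv : inA t^-1.
Proof. by exists 1, 1%N, 0%N; rewrite rmorph1 expr1 expr0 mulr1 div1r. Qed.

Lemma inA_one_sub_t_inv : inA (1 - t)^-1.
Proof. by exists 1, 0%N, 1%N; rewrite rmorph1 expr1 expr0 div1r mul1r. Qed.

Lemma inA_s j : inA (s j).
Proof.
case: j => [[|[|[|//]]] ?]; rewrite sE /mobius_orbit /=.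
- by exists 'X, 0%N, 0%N; rewrite !expr0 mulr1 divr1.
- exact/inA_add/inA_opp/inA_t_inv/inA_1.
- exact: inA_one_sub_t_inv.
Qed.

Lemma inA_monom e : inA (monom e).
Proof. by case: e => [[j n]|]; [exact/inA_exp/inA_s | exact: inA_1]. Qed.

Definition kspan (x : K) : Prop :=
  exists L : seq (idx * k), x = \sum_(p <- L) kK p.2 * monom p.1.

Lemma kspan0 : kspan 0.
Proof. by exists [::]; rewrite big_nil. Qed.

Lemma kspanD x y : kspan x -> kspan y -> kspan (x + y).
Proof. by move=> [L1 ->] [L2 ->]; exists (L1 ++ L2); rewrite big_cat. Qed.

Lemma kspanZ c x : kspan x -> kspan (kK c * x).
Proof.
move=> [L ->]; exists [seq (p.1, c * p.2) | p <- L]; rewrite big_map mulr_sumr.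
by apply: eq_bigr => p _; rewrite rmorphM mulrA.
Qed.

Lemma kspanB x y : kspan x -> kspan y -> kspan (x - y).
Proof. by move=> Sx Sy; rewrite -mulN1r -(rmorph1 kK) -rmorphN; apply/kspanD/kspanZ. Qed.

Lemma kspan_sum (I : Type) (r : seq I) (G : I -> K) :
  (forall i, kspan (G i)) -> kspan (\sum_(i <- r) G i).
Proof. by move=> SG; apply: big_ind => //; [exact: kspan0 | exact: kspanD]. Qed.

Lemma kspan_monom e : kspan (monom e).
Proof. by exists [:: (e, 1)]; rewrite big_seq1 rmorph1 mul1r. Qed.

Lemma kspan_exp j n : kspan (s j ^+ n).
Proof.
case: n => [|n]; last exact: (kspan_monom (Some (j, n))).
by rewrite expr0; apply: (kspan_monom None).
Qed.

Lemma kspan_exp_mul_succ j a b : kspan (s j ^+ a * s (j + 1) ^+ b).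
Proof.
elim: b a => [|b IHb] a; first by rewrite expr0 mulr1; apply: kspan_exp.
case: a => [|a]; first by rewrite expr0 mul1r; apply: kspan_exp.
rewrite !exprS mulrACA (mobius_orbit_mul_succ t_neq0 one_sub_t_neq0).
by rewrite mulrBl mul1r mulrA -exprS; apply: kspanB.
Qed.

Lemma kspan_exp_mul i j a b : kspan (s i ^+ a * s j ^+ b).
Proof.
have [<-|/ord3_adj[->|->]] := eqVneq i j; first by rewrite -exprD; apply: kspan_exp.
  exact: kspan_exp_mul_succ.
by rewrite mulrC; apply: kspan_exp_mul_succ.
Qed.

Lemma monom_exp e : exists j n, monom e = s j ^+ n.
Proof. by case: e => [[j n]|]; [exists j, n.+1 | exists 0, 0%N; rewrite expr0]. Qed.

Lemma kspanM x y : kspan x -> kspan y -> kspan (x * y).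
Proof.
move=> [L1 ->] [L2 ->]; rewrite mulr_suml; apply: kspan_sum => p1.
rewrite mulr_sumr; apply: kspan_sum => p2; rewrite mulrACA -rmorphM; apply: kspanZ.
by have [[i [a ->]] [j [b ->]]] := (monom_exp p1.1, monom_exp p2.1); apply: kspan_exp_mul.
Qed.

Lemma kspanXn x n : kspan x -> kspan (x ^+ n).
Proof.
move=> Sx; elim: n => [|n IHn]; last by rewrite exprS; apply: kspanM.
by rewrite expr0; apply: (kspan_monom None).
Qed.

Lemma kspan_emb p : kspan (emb p).
Proof.
elim/poly_ind: p => [|p c IHp]; first by rewrite rmorph0; apply: kspan0.
rewrite embD embM emb_X -[emb c%:P]/(kK c); apply: kspanD.
  by apply: kspanM IHp _; apply: (kspan_exp 0 1).
by rewrite -[kK c]mulr1; apply/kspanZ/(kspan_monom None).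
Qed.

Lemma inA_kspan a : inA a -> kspan a.
Proof.
move=> [p [m [n ->]]]; rewrite invfM -(exprVn t) -(exprVn (1 - t)) mulrA.
apply/kspanM/kspanXn; last exact: (kspan_exp 2 1).
apply/kspanM/kspanXn; first exact: kspan_emb.
by rewrite -(subKr 1 t^-1); apply: kspanB (kspan_monom None) (kspan_exp 1 1).
Qed.

Lemma kspan_combination x : kspan x ->
  exists (l : seq idx) (c : idx -> k), x = \sum_(e <- l) kK (c e) * monom e.
Proof.
move=> [L ->]; exists (undup (map fst L)), (fun e => \sum_(p <- L | p.1 == e) p.2).
under [RHS]eq_bigr => e _ do rewrite rmorph_sum mulr_suml big_mkcond.
rewrite exchange_big /=; apply: eq_big_seq => p pL.
rewrite -big_mkcond (eq_bigl (pred1 p.1)) => [|e]; last by rewrite eq_sym.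
by rewrite -big_filter filter_pred1_uniq ?undup_uniq ?mem_undup ?map_f // big_seq1.
Qed.

Definition kbasisA (I : eqType) (b : I -> K) : Prop :=
  [/\ forall e, inA (b e),
      forall (l : seq I) (c : I -> k), uniq l ->
        \sum_(e <- l) kK (c e) * b e = 0 -> forall e, e \in l -> c e = 0
    & forall a, inA a -> exists (l : seq I) (c : I -> k),
        a = \sum_(e <- l) kK (c e) * b e].

Lemma monom_kbasis : kbasisA monom.
Proof.
split; [exact: inA_monom | exact: monom_free |].
by move=> a /inA_kspan/kspan_combination.
Qed.

End RationalFunctions.

Section LieAlgebra.
Variable k : fieldType.
Hypothesis hk : 2%N \notin [pchar k].
Local Notation K := (Kf k).
Local Notation t := (tt k).
Local Notation kK := (@kK k).

Lemma two_neq0 : (2 : K) != 0.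
Proof. by rewrite -(rmorph_nat kK) fmorph_eq0; move: hk; rewrite inE /=. Qed.

Lemma four_neq0 : (4 : K) != 0.
Proof. by rewrite (_ : 4 = 2 * 2) ?mulf_neq0 ?two_neq0 //; ring. Qed.

Lemma mul2_half (x : K) : 2 * (x / 2) = x.
Proof. by rewrite mulrCA mulfV ?mulr1 ?two_neq0. Qed.

Lemma ord2P (i : 'I_2) : i = 0 \/ i = 1.
Proof. by case: i => [[|[|//]] ?]; [left | right]; apply: val_inj. Qed.

Lemma mxtrace2 (A : 'M[K]_2) : \tr A = A 0 0 + A 1 1.
Proof. by rewrite /mxtrace big_ord_recl big_ord1; congr (A _ _ + A _ _); apply: val_inj. Qed.

Lemma mx2_ext (A B : 'M[K]_2) :
  A 0 0 = B 0 0 -> A 0 1 = B 0 1 -> A 1 0 = B 1 0 -> A 1 1 = B 1 1 -> A = B.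
Proof.
move=> e00 e01 e10 e11; apply/matrixP => i j.
by case: (ord2P i) => ->; case: (ord2P j) => ->.
Qed.

Lemma mx2D (a b c d a' b' c' d' : K) :
  mx2 a b c d + mx2 a' b' c' d' = mx2 (a + a') (b + b') (c + c') (d + d').
Proof. by apply: mx2_ext; rewrite !mxE. Qed.

Lemma mx2Z (r a b c d : K) : r *: mx2 a b c d = mx2 (r * a) (r * b) (r * c) (r * d).
Proof. by apply: mx2_ext; rewrite !mxE. Qed.

Lemma mx2N (a b c d : K) : - mx2 a b c d = mx2 (- a) (- b) (- c) (- d).
Proof. by apply: mx2_ext; rewrite !mxE. Qed.

Definition xyz (v : K * K * K) : 'M[K]_2 := v.1.1 *: xm k + v.1.2 *: ym k + v.2 *: zm k.
Definition coords (g : 'M[K]_2) : K * K * K := (cx g, cy g, cz g).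

Lemma xyzE a b c : xyz (a, b, c) = mx2 (c - a - b) (2 * a) (- (2 * b)) (a + b - c).
Proof. by rewrite /xyz /xm /ym /zm /= !(mx2Z, mx2D); congr mx2; ring. Qed.

Lemma coordsK : cancel xyz coords.
Proof.
move=> [[a b] c]; rewrite /coords /cz /cy /cx xyzE /mx2 !mxE /=.
by rewrite !mulNr -!mulrA !mul2_half opprK; congr (_, _, _); ring.
Qed.

Lemma xyz_coords g : \tr g = 0 -> xyz (coords g) = g.
Proof.
rewrite mxtrace2 => tr0; have g11 : g 1 1 = - g 0 0 by apply/eqP; rewrite -addr_eq0 addrC tr0.
rewrite /coords /cz /cy /cx xyzE /mx2; apply: mx2_ext; rewrite !mxE /= ?g11;
  by rewrite ?mulrN ?mul2_half ?opprK; ring.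
Qed.

Lemma xyz_inj : injective xyz.
Proof. exact: can_inj coordsK. Qed.

Lemma scale_xyz r v : r *: xyz v = xyz (scale3 r v).
Proof.
by case: v => [[a b] c]; rewrite !xyzE mx2Z; congr mx2; ring.
Qed.

Lemma coordsZ r g : coords (r *: g) = scale3 r (coords g).
Proof. by rewrite /coords /cz /cy /cx !mxE /=; congr (_, _, _); ring. Qed.

Lemma tau1_coords (g : 'M[K]_2) : tau1 g = xyz (tau1c t (coords g)).
Proof.
rewrite /tau1 /tau1x /tau1y /tau1z /coords; move: (cx g) (cy g) (cz g) => a b c.
by rewrite xyzE /xm /ym /zm /tt' /tt'' !(mx2Z, mx2N, mx2D); congr mx2; ring.
Qed.

Lemma tau2_coords (g : 'M[K]_2) : tau2 g = xyz (tau2c t (coords g)).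
Proof.
rewrite /tau2 /tau2x /tau2y /tau2z /coords; move: (cx g) (cy g) (cz g) => a b c.
by rewrite xyzE /xm /ym /zm /tt' /tt'' !(mx2Z, mx2N, mx2D); congr mx2; ring.
Qed.

Lemma tau1Z (r : K) (g : 'M[K]_2) : tau1 (r *: g) = r *: tau1 g.
Proof. by rewrite !tau1_coords coordsZ tau1c_scale scale_xyz. Qed.

Lemma tau2Z (r : K) (g : 'M[K]_2) : tau2 (r *: g) = r *: tau2 g.
Proof. by rewrite !tau2_coords coordsZ tau2c_scale scale_xyz. Qed.

Lemma u_xyz i : u k i = xyz (ucoord t i).
Proof.
rewrite /u /ucoord /tt' /tt''; case: i => [[|[|[|//]]] ?] /=;
  by rewrite xyzE /xm /ym /zm !(mx2Z, mx2D); congr mx2; ring.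
Qed.

Lemma tau_u i : tau1 (u k i) = eps1 i *: u k i /\ tau2 (u k i) = eps2 i *: u k i.
Proof.
have [e1 e2] := tau_ucoord (t_neq0 k) (one_sub_t_neq0 k) four_neq0 i.
by rewrite tau1_coords tau2_coords u_xyz coordsK e1 e2 !scale_xyz.
Qed.

Lemma gsubE i (g : 'M[K]_2) :
  gsub i g <-> ing g /\ tau1 g = eps1 i *: g /\ tau2 g = eps2 i *: g.
Proof. by case: i => [[|[|[|//]]] ?]; rewrite /gsub /eps1 /eps2 /= ?scale1r ?scaleN1r. Qed.

Ltac inA_close := repeat match goal with
  | |- inA (tt _) => exact: (inA_s _ 0)
  | |- inA (1 - (tt _)^-1) => exact: (inA_s _ 1)
  | |- inA ((1 - tt _)^-1) => exact: (inA_s _ 2)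
  | |- inA (_%:R^-1) => exact: inA_natV
  | |- inA (_%:R) => exact: inA_nat
  | |- inA 1 => exact: inA_1
  | |- inA (_ * _) => apply: inA_mul
  | |- inA (_ + _) => apply: inA_add
  | |- inA (- _) => apply: inA_opp
  | H : inA ?x |- inA ?x => exact: H
  end.

Lemma ing_scale (a : K) (g : 'M[K]_2) : inA a -> ing g -> ing (a *: g).
Proof.
move=> Aa [tr0 Ag]; split; first by rewrite mxtraceZ tr0 mulr0.
by move=> i j; rewrite mxE; apply: inA_mul.
Qed.

Lemma ing_xyz (a b c : K) : inA a -> inA b -> inA c -> ing (xyz (a, b, c)).
Proof.
move=> Aa Ab Ac; rewrite xyzE; split; first by rewrite mxtrace2 /mx2 !mxE /=; ring.
move=> i j; rewrite /mx2 mxE.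
by case: (ord2P i) => ->; case: (ord2P j) => -> /=; inA_close.
Qed.

Lemma inA_coords (g : 'M[K]_2) : ing g -> [/\ inA (cx g), inA (cy g) & inA (cz g)].
Proof.
move=> [_ Ag]; have Ax : inA (cx g) by rewrite /cx; inA_close.
have Ay : inA (cy g) by rewrite /cy; inA_close.
by split=> //; rewrite /cz; inA_close.
Qed.

Lemma ing_u i : ing (u k i).
Proof. by rewrite u_xyz; case: i => [[|[|[|//]]] ?]; apply: ing_xyz; rewrite /=; inA_close. Qed.

Lemma u_neq0 i : u k i != 0.
Proof.
apply/eqP => u0; have := congr1 (pivot i) (congr1 coords u0).
rewrite u_xyz coordsK pivot_ucoord.
rewrite /coords /cz /cy /cx !mxE mul0r oppr0 !addr0 /pivot mul1r.
by case: ifP => _; [|case: ifP => _]; apply/eqP; rewrite invr_eq0 four_neq0.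
Qed.

Lemma gsubP i (g : 'M[K]_2) : gsub i g <-> exists2 a, inA a & g = a *: u k i.
Proof.
rewrite gsubE; split => [[Ig [e1 e2]] | [a Aa ->]]; last first.
  split; first exact: ing_scale Aa (ing_u i).
  have [e1 e2] := tau_u i.
  by rewrite tau1Z tau2Z e1 e2 !scalerA mulrC [eps2 i * a]mulrC.
have [tr0 _] := Ig; have eg := xyz_coords tr0; set v := coords g in eg *.
have ev : v = scale3 (4 * pivot i v) (ucoord t i).
  apply: (eigen_ucoord (t_neq0 k) (one_sub_t_neq0 k) four_neq0); apply: xyz_inj.
    by rewrite -tau1_coords e1 -scale_xyz eg.
  by rewrite -tau2_coords e2 -scale_xyz eg.
exists (4 * pivot i v); last by rewrite -eg {1}ev -scale_xyz -u_xyz.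
have [Ax Ay Az] := inA_coords Ig.
apply: inA_mul; first exact: inA_nat.
by rewrite /v /coords /pivot; case: ifP => _; [|case: ifP => _].
Qed.

End LieAlgebra.

Lemma is_kbasis_scale (k : fieldType) (I : eqType) (V : 'M[Kf k]_2 -> Prop)
    (b : I -> Kf k) (w : 'M[Kf k]_2) (bw : I -> 'M[Kf k]_2) :
  kbasisA b -> w != 0 -> (forall g, V g <-> exists2 a, inA a & g = a *: w) ->
  (forall e, bw e = b e *: w) -> is_kbasis V bw.
Proof.
move=> [Ab free span] w0 VP bwE.
have combE l c : \sum_(e <- l) kK (c e) *: bw e = (\sum_(e <- l) kK (c e) * b e) *: w.
  by rewrite scaler_suml; apply: eq_bigr => e _; rewrite bwE scalerA.
split.
- by move=> e; apply/VP; exists (b e); rewrite ?bwE.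
- move=> l c ul; rewrite combE => /eqP.
  by rewrite scaler_eq0 (negPf w0) orbF => /eqP; apply: free.
- by move=> g /VP[a /span[l [c ->]] ->]; exists l, c; rewrite combE.
Qed.

Lemma fam_monom (k : fieldType) (i : 'I_3) e : fam k i e = monom k e *: u k i.
Proof. by case: e => [[j n]|] /=; rewrite ?scale1r. Qed.

Theorem corollary2p2 (k : fieldType) (hk : 2%N \notin [pchar k]) (i : 'I_3) :
  is_kbasis (@gsub k i) (@fam k i).
Proof. exact: is_kbasis_scale (monom_kbasis k) (u_neq0 hk i) (gsubP hk i) (fam_monom k i). Qed.
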